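(* Let $m\ge1$ and $r,s\ge0$ with $r+s\ge1$. Then $H_m\oplus A(r\mid s)$ is capable if and only if $m=1$.
   Context: All algebras are over a field $\mathbb{F}$ of characteristic $\neq 2,3$. $A(r\mid s)$ is the abelian Lie superalgebra of dimension $(r\mid s)$. $H_m$ is the Lie superalgebra with even basis $x_1,\dots,x_m$, odd basis $y_1,\dots,y_m,z$, and nonzero brackets $[x_j,y_j]=z$ ($1\le j\le m$). A Lie superalgebra $L$ is capable if $L\cong H/Z(H)$ for some Lie superalgebra $H$. *)

From HB Require Import structures.
From mathcomp Require Import all_boot all_algebra.
Set Implicit Arguments. Unset Strict Implicit. Unset Printing Implicit Defensive.
Import GRing.Theory.
Local Open Scope ring_scope.

(* A Lie superalgebra L = L_0 (+) L_1 over F, given by its homogeneous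
   components and the three homogeneous pieces of the bracket:
     br00 : L_0 x L_0 -> L_0,  br01 : L_0 x L_1 -> L_1  ([x,u] for x even, u odd;
     [u,x] := -[x,u]),  br11 : L_1 x L_1 -> L_0.
   Axioms: bilinearity, graded skew-symmetry and the graded Jacobi identity
   (written out on homogeneous triples; the remaining orderings follow from
   graded skew-symmetry). *)
Record LieSuperalgebra (F : fieldType) := LieSuper {
  ev : lmodType F;
  od : lmodType F;
  br00 : ev -> ev -> ev;
  br01 : ev -> od -> od;
  br11 : od -> od -> ev;
  br00_linl : forall (a : F) x y z, br00 (a *: x + y) z = a *: br00 x z + br00 y z;
  br00_linr : forall (a : F) x y z, br00 x (a *: y + z) = a *: br00 x y + br00 x z;
  br01_linl : forall (a : F) x y u, br01 (a *: x + y) u = a *: br01 x u + br01 y u;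
  br01_linr : forall (a : F) x u v, br01 x (a *: u + v) = a *: br01 x u + br01 x v;
  br11_linl : forall (a : F) u v w, br11 (a *: u + v) w = a *: br11 u w + br11 v w;
  br11_linr : forall (a : F) u v w, br11 u (a *: v + w) = a *: br11 u v + br11 u w;
  br00_skew : forall x y, br00 x y = - br00 y x;
  br11_sym : forall u v, br11 u v = br11 v u;
  jacobi000 : forall x y z,
    br00 x (br00 y z) = br00 (br00 x y) z + br00 y (br00 x z);
  jacobi001 : forall x y u,
    br01 x (br01 y u) = br01 (br00 x y) u + br01 y (br01 x u);
  jacobi011 : forall x u v,
    br00 x (br11 u v) = br11 (br01 x u) v + br11 u (br01 x v);
  jacobi111 : forall u v w,
    br01 (br11 u v) w + br01 (br11 v w) u + br01 (br11 w u) v = 0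
}.

Arguments br00 {F} _ _ _.
Arguments br01 {F} _ _ _.
Arguments br11 {F} _ _ _.
Arguments ev {F} _.
Arguments od {F} _.

Definition lin (F : fieldType) (V W : lmodType F) (f : V -> W) : Prop :=
  forall (a : F) x y, f (a *: x + y) = a *: f x + f y.

Definition is_hom (F : fieldType) (H L : LieSuperalgebra F)
  (f0 : ev H -> ev L) (f1 : od H -> od L) : Prop :=
  [/\ lin f0, lin f1,
      forall x y, f0 (br00 H x y) = br00 L (f0 x) (f0 y),
      forall x u, f1 (br01 H x u) = br01 L (f0 x) (f1 u) &
      forall u v, f0 (br11 H u v) = br11 L (f1 u) (f1 v)].

(* The centre Z(H) = Z_0 (+) Z_1 (the centre of a superalgebra is graded). *)
Definition central_ev (F : fieldType) (H : LieSuperalgebra F) (x : ev H) : Prop :=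
  (forall y, br00 H x y = 0) /\ (forall u, br01 H x u = 0).
Definition central_od (F : fieldType) (H : LieSuperalgebra F) (u : od H) : Prop :=
  (forall x, br01 H x u = 0) /\ (forall v, br11 H u v = 0).

(* L is capable iff L ~ H / Z(H) for some Lie superalgebra H, i.e. (first
   isomorphism theorem) there is a surjective homomorphism H -> L whose
   kernel is exactly Z(H). *)
Definition capable (F : fieldType) (L : LieSuperalgebra F) : Prop :=
  exists (H : LieSuperalgebra F) (f0 : ev H -> ev L) (f1 : od H -> od L),
    [/\ is_hom f0 f1,
        (forall y, exists x, f0 x = y),
        (forall v, exists u, f1 u = v),
        (forall x, f0 x = 0 <-> central_ev x) &
        (forall u, f1 u = 0 <-> central_od u)].

Section DirectSum.
Variables (F : fieldType) (L1 L2 : LieSuperalgebra F).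

Definition dsE : lmodType F := (ev L1 * ev L2)%type.
Definition dsO : lmodType F := (od L1 * od L2)%type.
Definition ds00 (x y : dsE) : dsE := (br00 L1 x.1 y.1, br00 L2 x.2 y.2).
Definition ds01 (x : dsE) (u : dsO) : dsO := (br01 L1 x.1 u.1, br01 L2 x.2 u.2).
Definition ds11 (u v : dsO) : dsE := (br11 L1 u.1 v.1, br11 L2 u.2 v.2).

Lemma ds_l1 (a : F) x y z : ds00 (a *: x + y) z = a *: ds00 x z + ds00 y z.
Proof. by rewrite /ds00 /= !br00_linl. Qed.
Lemma ds_l2 (a : F) x y z : ds00 x (a *: y + z) = a *: ds00 x y + ds00 x z.
Proof. by rewrite /ds00 /= !br00_linr. Qed.
Lemma ds_l3 (a : F) x y u : ds01 (a *: x + y) u = a *: ds01 x u + ds01 y u.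
Proof. by rewrite /ds01 /= !br01_linl. Qed.
Lemma ds_l4 (a : F) x u v : ds01 x (a *: u + v) = a *: ds01 x u + ds01 x v.
Proof. by rewrite /ds01 /= !br01_linr. Qed.
Lemma ds_l5 (a : F) u v w : ds11 (a *: u + v) w = a *: ds11 u w + ds11 v w.
Proof. by rewrite /ds11 /= !br11_linl. Qed.
Lemma ds_l6 (a : F) u v w : ds11 u (a *: v + w) = a *: ds11 u v + ds11 u w.
Proof. by rewrite /ds11 /= !br11_linr. Qed.
Lemma ds_sk x y : ds00 x y = - ds00 y x.
Proof. by rewrite /ds00 /= br00_skew [br00 L2 _ _]br00_skew. Qed.
Lemma ds_sy u v : ds11 u v = ds11 v u.
Proof. by rewrite /ds11 /= br11_sym [br11 L2 _ _]br11_sym. Qed.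
Lemma ds_j0 x y z : ds00 x (ds00 y z) = ds00 (ds00 x y) z + ds00 y (ds00 x z).
Proof. by rewrite /ds00 /= (jacobi000 x.1) (jacobi000 x.2). Qed.
Lemma ds_j1 x y u : ds01 x (ds01 y u) = ds01 (ds00 x y) u + ds01 y (ds01 x u).
Proof. by rewrite /ds00 /ds01 /= (jacobi001 x.1) (jacobi001 x.2). Qed.
Lemma ds_j2 x u v : ds00 x (ds11 u v) = ds11 (ds01 x u) v + ds11 u (ds01 x v).
Proof. by rewrite /ds00 /ds01 /ds11 /= (jacobi011 x.1) (jacobi011 x.2). Qed.
Lemma ds_j3 u v w : ds01 (ds11 u v) w + ds01 (ds11 v w) u + ds01 (ds11 w u) v = 0.
Proof.
by rewrite /ds01 /ds11; apply: (f_equal2 pair); apply: jacobi111.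
Qed.

Definition dsum : LieSuperalgebra F :=
  @LieSuper F dsE dsO ds00 ds01 ds11 ds_l1 ds_l2 ds_l3 ds_l4 ds_l5 ds_l6
    ds_sk ds_sy ds_j0 ds_j1 ds_j2 ds_j3.
End DirectSum.

Section Abelian.
Variables (F : fieldType) (r s : nat).
Definition abE : lmodType F := 'rV[F]_r.
Definition abO : lmodType F := 'rV[F]_s.
Definition ab00 (x y : abE) : abE := 0.
Definition ab01 (x : abE) (u : abO) : abO := 0.
Definition ab11 (u v : abO) : abE := 0.
Lemma ab_l1 (a : F) x y z : ab00 (a *: x + y) z = a *: ab00 x z + ab00 y z.
Proof. by rewrite /ab00 scaler0 addr0. Qed.
Lemma ab_l2 (a : F) x y z : ab00 x (a *: y + z) = a *: ab00 x y + ab00 x z.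
Proof. by rewrite /ab00 scaler0 addr0. Qed.
Lemma ab_l3 (a : F) x y u : ab01 (a *: x + y) u = a *: ab01 x u + ab01 y u.
Proof. by rewrite /ab01 scaler0 addr0. Qed.
Lemma ab_l4 (a : F) x u v : ab01 x (a *: u + v) = a *: ab01 x u + ab01 x v.
Proof. by rewrite /ab01 scaler0 addr0. Qed.
Lemma ab_l5 (a : F) u v w : ab11 (a *: u + v) w = a *: ab11 u w + ab11 v w.
Proof. by rewrite /ab11 scaler0 addr0. Qed.
Lemma ab_l6 (a : F) u v w : ab11 u (a *: v + w) = a *: ab11 u v + ab11 u w.
Proof. by rewrite /ab11 scaler0 addr0. Qed.
Lemma ab_sk x y : ab00 x y = - ab00 y x.
Proof. by rewrite /ab00 oppr0. Qed.
Lemma ab_sy u v : ab11 u v = ab11 v u.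
Proof. by []. Qed.
Lemma ab_j0 x y z : ab00 x (ab00 y z) = ab00 (ab00 x y) z + ab00 y (ab00 x z).
Proof. by rewrite /ab00 addr0. Qed.
Lemma ab_j1 x y u : ab01 x (ab01 y u) = ab01 (ab00 x y) u + ab01 y (ab01 x u).
Proof. by rewrite /ab01 addr0. Qed.
Lemma ab_j2 x u v : ab00 x (ab11 u v) = ab11 (ab01 x u) v + ab11 u (ab01 x v).
Proof. by rewrite /ab00 /ab11 addr0. Qed.
Lemma ab_j3 u v w : ab01 (ab11 u v) w + ab01 (ab11 v w) u + ab01 (ab11 w u) v = 0.
Proof. by rewrite /ab01 !addr0. Qed.

Definition Abel : LieSuperalgebra F :=
  @LieSuper F abE abO ab00 ab01 ab11 ab_l1 ab_l2 ab_l3 ab_l4 ab_l5 ab_l6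
    ab_sk ab_sy ab_j0 ab_j1 ab_j2 ab_j3.
End Abelian.

(* ---------- H_m ----------
   even part: span of x_1..x_m            (coordinates in 'rV_m);
   odd part : span of y_1..y_m and z      (coordinates in 'rV_m * F, the
              F-component being the z-coordinate);
   the only nonzero brackets are [x_j, y_j] = z, i.e.
   [sum a_j x_j, sum b_j y_j + c z] = (sum_j a_j b_j) z. *)
Section Heisenberg.
Variables (F : fieldType) (m : nat).
Definition hpair (x y : 'rV[F]_m) : F := \sum_(j < m) x 0 j * y 0 j.

Lemma hpair_linl (a : F) x y z :
  hpair (a *: x + y) z = a * hpair x z + hpair y z.
Proof.
rewrite /hpair big_distrr -big_split /=; apply: eq_bigr => j _.
by rewrite !mxE mulrDl mulrA.
Qed.
Lemma hpair_linr (a : F) x y z :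
  hpair x (a *: y + z) = a * hpair x y + hpair x z.
Proof.
rewrite /hpair big_distrr -big_split /=; apply: eq_bigr => j _.
by rewrite !mxE mulrDr mulrCA.
Qed.
Lemma hpair0r x : hpair x 0 = 0.
Proof. by rewrite /hpair big1 // => j _; rewrite mxE mulr0. Qed.
Lemma hpair0l x : hpair 0 x = 0.
Proof. by rewrite /hpair big1 // => j _; rewrite mxE mul0r. Qed.

Definition hE : lmodType F := 'rV[F]_m.
Definition hO : lmodType F := ('rV[F]_m * F^o)%type.
Definition h00 (x y : hE) : hE := 0.
Definition h01 (x : hE) (u : hO) : hO := (0, hpair x u.1).
Definition h11 (u v : hO) : hE := 0.

Lemma h_l1 (a : F) x y z : h00 (a *: x + y) z = a *: h00 x z + h00 y z.
Proof. by rewrite /h00 scaler0 addr0. Qed.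
Lemma h_l2 (a : F) x y z : h00 x (a *: y + z) = a *: h00 x y + h00 x z.
Proof. by rewrite /h00 scaler0 addr0. Qed.
Lemma h_l3 (a : F) x y u : h01 (a *: x + y) u = a *: h01 x u + h01 y u.
Proof. by rewrite /h01 hpair_linl; congr pair; rewrite /= scaler0 addr0. Qed.
Lemma h_l4 (a : F) x u v : h01 x (a *: u + v) = a *: h01 x u + h01 x v.
Proof. by rewrite /h01 /= hpair_linr; congr pair; rewrite /= scaler0 addr0. Qed.
Lemma h_l5 (a : F) u v w : h11 (a *: u + v) w = a *: h11 u w + h11 v w.
Proof. by rewrite /h11 scaler0 addr0. Qed.
Lemma h_l6 (a : F) u v w : h11 u (a *: v + w) = a *: h11 u v + h11 u w.
Proof. by rewrite /h11 scaler0 addr0. Qed.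
Lemma h_sk x y : h00 x y = - h00 y x.
Proof. by rewrite /h00 oppr0. Qed.
Lemma h_sy u v : h11 u v = h11 v u.
Proof. by []. Qed.
Lemma h_j0 x y z : h00 x (h00 y z) = h00 (h00 x y) z + h00 y (h00 x z).
Proof. by rewrite /h00 addr0. Qed.
Lemma h_j1 x y u : h01 x (h01 y u) = h01 (h00 x y) u + h01 y (h01 x u).
Proof.
rewrite /h01 /h00 /= !hpair0r !hpair0l.
have -> : ((0, 0) : hO) = 0 by [].
by rewrite addr0.
Qed.
Lemma h_j2 x u v : h00 x (h11 u v) = h11 (h01 x u) v + h11 u (h01 x v).
Proof. by rewrite /h00 /h11 addr0. Qed.
Lemma h_j3 u v w : h01 (h11 u v) w + h01 (h11 v w) u + h01 (h11 w u) v = 0.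
Proof.
rewrite /h01 /h11 !hpair0l.
have -> : ((0, 0) : hO) = 0 by [].
by rewrite !addr0.
Qed.

Definition Heis : LieSuperalgebra F :=
  @LieSuper F hE hO h00 h01 h11 h_l1 h_l2 h_l3 h_l4 h_l5 h_l6
    h_sk h_sy h_j0 h_j1 h_j2 h_j3.
End Heisenberg.

From HB Require Import structures.
From mathcomp Require Import all_boot all_algebra.
From mathcomp Require Import ring.
Import GRing.Theory.
Set Implicit Arguments. Unset Strict Implicit. Unset Printing Implicit Defensive.
Local Open Scope ring_scope.

(* Write L = H_m (+) A(r|s), with basis x_k | y_k, z of H_m.

   Not capable for m >= 2.  Let f : H -> L be onto with kernel Z(H), and
   lift x_k, y_k, z to X_k, Y_k, Z.  Since all brackets of L vanish except
   [x_k, y_k] = z, every bracket of H is determined modulo Z(H):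
   [H_0, H_0] and [H_1, H_1] are central, and [h, Y_k], [X_k, v] agree with
   multiples of Z modulo the centre.  As brackets only depend on classes
   modulo the centre, the Jacobi identity through a second index l <> k
   gives [X_k, Z] = 0 and [Z, Y_k] = 0, and then, through [X_k, Y_k] = Z
   mod Z(H), that Z is central.  Hence f(Z) = z = 0, a contradiction.

   Capable for m = 1.  A 2-cocycle theta of L with values in a module M
   defines a central extension L (+)_theta M projecting onto L; its centre
   is exactly M as soon as theta is nondegenerate on the centre of L
   (capable_of_cocycle).  For m = 1 the cocycle adding the brackets
   [x_1, a] for all a in A(r|s) and [x_1, z] is nondegenerate. *)

Section LinearMaps.
Variables (F : fieldType) (V W : lmodType F) (f : V -> W).
Hypothesis f_lin : lin f.

Lemma lin0 : f 0 = 0.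
Proof.
have h := f_lin 1 0 0; rewrite !scale1r addr0 in h.
by apply: (addrI (f 0)); rewrite addr0 -h.
Qed.

Lemma linD x y : f (x + y) = f x + f y.
Proof. by rewrite -{1}(scale1r x) f_lin scale1r. Qed.

Lemma linZ a x : f (a *: x) = a *: f x.
Proof. by rewrite -(addr0 (a *: x)) f_lin lin0 addr0. Qed.

Lemma linB x y : f (x - y) = f x - f y.
Proof. by rewrite linD -scaleN1r linZ scaleN1r. Qed.
End LinearMaps.

Section Brackets.
Variables (F : fieldType) (H : LieSuperalgebra F).

Lemma br01_lin x : lin (br01 H x).
Proof. by move=> a u v; apply: br01_linr. Qed.

Lemma br11_lin u : lin (br11 H u).
Proof. by move=> a v w; apply: br11_linr. Qed.

Lemma br11_linl_fun v : lin (br11 H ^~ v).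
Proof. by move=> a u w; apply: br11_linl. Qed.

Lemma br00_central_r x c : central_ev c -> br00 H x c = 0.
Proof. by move=> [c0 _]; rewrite br00_skew c0 oppr0. Qed.

Lemma br01_congr_center x u v : central_od (u - v) -> br01 H x u = br01 H x v.
Proof.
by move=> [c1 _]; apply/eqP; rewrite -subr_eq0 -(linB (br01_lin x)) c1.
Qed.

Lemma br11_congr_center u v w : central_od (u - v) -> br11 H u w = br11 H v w.
Proof.
by move=> [_ c1]; apply/eqP; rewrite -subr_eq0 -(linB (br11_linl_fun w)) c1.
Qed.
End Brackets.

Section HeisenbergBasis.
Variables (F : fieldType) (m r s : nat).
Let L := dsum (Heis F m) (Abel F r s).

Definition unit_row (k : 'I_m) : 'rV[F]_m := \row_j (j == k)%:R.
Definition xb (k : 'I_m) : ev L := (unit_row k, 0).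
Definition yb (k : 'I_m) : od L := ((unit_row k, 0), 0).
Definition zb : od L := ((0, 1), 0).

Lemma hpair_unit_row_r (a : 'rV[F]_m) k : hpair a (unit_row k) = a 0 k.
Proof.
rewrite /hpair (bigD1 k) //= big1 ?addr0 => [|j /negbTE njk];
  by rewrite !mxE ?eqxx ?njk ?mulr1 ?mulr0.
Qed.

Lemma hpair_unit_row_l (a : 'rV[F]_m) k : hpair (unit_row k) a = a 0 k.
Proof.
rewrite /hpair (bigD1 k) //= big1 ?addr0 => [|j /negbTE njk];
  by rewrite !mxE ?eqxx ?njk ?mul1r ?mul0r.
Qed.

Lemma br_yb (h : ev L) k : br01 L h (yb k) = (h.1 : 'rV[F]_m) 0 k *: zb.
Proof.
rewrite /= /ds01 /= /h01 /= hpair_unit_row_r /zb.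
congr pair; rewrite ?scaler0 //; congr pair; rewrite ?scaler0 //=.
by rewrite /GRing.scale /= mulr1.
Qed.

Lemma br_xb k (v : od L) : br01 L (xb k) v = (v.1.1 : 'rV[F]_m) 0 k *: zb.
Proof.
rewrite /= /ds01 /= /h01 /= hpair_unit_row_l /zb.
congr pair; rewrite ?scaler0 //; congr pair; rewrite ?scaler0 //=.
by rewrite /GRing.scale /= mulr1.
Qed.

Lemma zb_neq0 : zb != 0.
Proof.
by apply/eqP => /(f_equal (fun u : od L => u.1.2)) /eqP; rewrite oner_eq0.
Qed.

Lemma scale_zb_eq0 (a : F) : a *: zb = 0 -> a = 0.
Proof. by move/eqP; rewrite scaler_eq0 (negbTE zb_neq0) orbF => /eqP. Qed.
End HeisenbergBasis.

Arguments xb {F m r s} k.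
Arguments yb {F m r s} k.
Arguments zb {F m r s}.

Section CoverOfHeisenbergSum.
Variables (F : fieldType) (m r s : nat) (H : LieSuperalgebra F).
Let L := dsum (Heis F m) (Abel F r s).
Variables (f0 : ev H -> ev L) (f1 : od H -> od L) (Z : od H).
Hypotheses (f_hom : is_hom f0 f1)
  (ker_ev : forall x, f0 x = 0 -> central_ev x)
  (ker_od : forall u, f1 u = 0 -> central_od u)
  (fZ : f1 Z = zb).

(* [L_0, L_0] = [L_1, L_1] = 0, so these brackets of H lie in the kernel *)
Lemma br00_central x y : central_ev (br00 H x y).
Proof. by case: f_hom => _ _ f00 _ _; apply: ker_ev; rewrite f00. Qed.

Lemma br11_central u v : central_ev (br11 H u v).
Proof. by case: f_hom => _ _ _ _ f11; apply: ker_ev; rewrite f11. Qed.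

Lemma br_lift_y k h Y :
  f1 Y = yb k -> central_od (br01 H h Y - (f0 h).1 0 k *: Z).
Proof.
case: f_hom => _ f1_lin _ f01 _ fY.
by apply: ker_od; rewrite (linB f1_lin) f01 fY br_yb (linZ f1_lin) fZ subrr.
Qed.

Lemma br_lift_x k X v :
  f0 X = xb k -> central_od (br01 H X v - (f1 v).1.1 0 k *: Z).
Proof.
case: f_hom => _ f1_lin _ f01 _ fX.
by apply: ker_od; rewrite (linB f1_lin) f01 fX br_xb (linZ f1_lin) fZ subrr.
Qed.

Lemma br_lifts k l X Y :
  f0 X = xb k -> f1 Y = yb l -> central_od (br01 H X Y - (l == k)%:R *: Z).
Proof. by move=> fX /(br_lift_y X); rewrite fX mxE. Qed.

Lemma lift_z_def k X Y :
  f0 X = xb k -> f1 Y = yb k -> central_od (br01 H X Y - Z).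
Proof. by move=> fX /(br_lifts fX); rewrite eqxx scale1r. Qed.

(* [X_k, Z] = [X_k, [X_l, Y_l]] = [[X_k, X_l], Y_l] + [X_l, [X_k, Y_l]] = 0 *)
Lemma lift_x_br_z k l Xk Xl Yl : k != l ->
  f0 Xk = xb k -> f0 Xl = xb l -> f1 Yl = yb l -> br01 H Xk Z = 0.
Proof.
move=> nkl fXk fXl fYl.
have Z_def := lift_z_def fXl fYl.
have [XkYl_central _] : central_od (br01 H Xk Yl).
  by have := br_lifts fXk fYl; rewrite eq_sym (negbTE nkl) scale0r subr0.
rewrite -(br01_congr_center Xk Z_def) jacobi001 XkYl_central addr0.
by case: (br00_central Xk Xl).
Qed.

(* [Z, Y_k] = [[X_l, Y_l], Y_k] = [X_l, [Y_l, Y_k]] - [Y_l, [X_l, Y_k]] = 0 *)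
Lemma z_br_lift_y k l Xl Yk Yl : k != l ->
  f0 Xl = xb l -> f1 Yk = yb k -> f1 Yl = yb l -> br11 H Z Yk = 0.
Proof.
move=> nkl fXl fYk fYl.
have Z_def := lift_z_def fXl fYl.
have [_ XlYk_central] : central_od (br01 H Xl Yk).
  by have := br_lifts fXl fYk; rewrite (negbTE nkl) scale0r subr0.
rewrite -(br11_congr_center Yk Z_def).
have := jacobi011 Xl Yl Yk.
rewrite (br00_central_r _ (br11_central _ _)).
by rewrite [br11 H Yl _]br11_sym XlYk_central addr0.
Qed.

(* Z = [X_k, Y_k] modulo Z(H), and [h, Y_k], [X_k, v] are multiples of Z
   modulo Z(H); so [X_k, Z] = [Z, Y_k] = 0 makes Z central. *)
Lemma lift_z_central k X Y : f0 X = xb k -> f1 Y = yb k ->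
  br01 H X Z = 0 -> br11 H Z Y = 0 -> central_od Z.
Proof.
move=> fX fY XZ ZY.
have Z_def := lift_z_def fX fY.
split=> [h | v].
- rewrite -(br01_congr_center h Z_def) jacobi001.
  have [_ ->] := br00_central h X; rewrite add0r.
  rewrite (br01_congr_center X (br_lift_y h fY)).
  by rewrite (linZ (br01_lin X)) XZ scaler0.
- rewrite -(br11_congr_center v Z_def).
  have := jacobi011 X Y v; rewrite (br00_central_r _ (br11_central _ _)).
  move/eqP; rewrite eq_sym addr_eq0 => /eqP ->.
  rewrite br11_sym (br11_congr_center Y (br_lift_x v fX)).
  by rewrite br11_sym (linZ (br11_lin Y)) br11_sym ZY scaler0 oppr0.
Qed.
End CoverOfHeisenbergSum.

Lemma Heis_sum_not_capable (F : fieldType) (m r s : nat) :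
  (2 <= m)%N -> ~ capable (dsum (Heis F m) (Abel F r s)).
Proof.
move=> hm [H [f0 [f1 [f_hom onto0 onto1 ker0 ker1]]]].
pose k : 'I_m := Ordinal (leq_trans (isT : (1 <= 2)%N) hm).
pose l : 'I_m := Ordinal hm.
have nkl : k != l by [].
have [[Xk fXk] [Xl fXl]] := (onto0 (xb k), onto0 (xb l)).
have [[Yk fYk] [Yl fYl]] := (onto1 (yb k), onto1 (yb l)).
have [Z fZ] := onto1 zb.
have ker_ev x := proj1 (ker0 x); have ker_od u := proj1 (ker1 u).
have Z_central : central_od Z.
  apply: (lift_z_central f_hom ker_ev ker_od fZ fXk fYk).
  - exact: (lift_x_br_z f_hom ker_ev ker_od fZ nkl fXk fXl fYl).
  - exact: (z_br_lift_y f_hom ker_ev ker_od fZ nkl fXl fYk fYl).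
by move/eqP: (zb_neq0 F m r s); rewrite -fZ (proj2 (ker1 Z) Z_central).
Qed.

Section CentralExtension.
Variables (F : fieldType) (L : LieSuperalgebra F) (M0 M1 : lmodType F)
  (theta00 : ev L -> ev L -> M0) (theta01 : ev L -> od L -> M1)
  (theta11 : od L -> od L -> M0).
Hypotheses
  (theta00_linl : forall (a : F) x y z,
     theta00 (a *: x + y) z = a *: theta00 x z + theta00 y z)
  (theta00_linr : forall (a : F) x y z,
     theta00 x (a *: y + z) = a *: theta00 x y + theta00 x z)
  (theta01_linl : forall (a : F) x y u,
     theta01 (a *: x + y) u = a *: theta01 x u + theta01 y u)
  (theta01_linr : forall (a : F) x u v,
     theta01 x (a *: u + v) = a *: theta01 x u + theta01 x v)
  (theta11_linl : forall (a : F) u v w,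
     theta11 (a *: u + v) w = a *: theta11 u w + theta11 v w)
  (theta11_linr : forall (a : F) u v w,
     theta11 u (a *: v + w) = a *: theta11 u v + theta11 u w)
  (theta00_skew : forall x y, theta00 x y = - theta00 y x)
  (theta11_sym : forall u v, theta11 u v = theta11 v u)
  (theta_jacobi000 : forall x y z,
     theta00 x (br00 L y z) = theta00 (br00 L x y) z + theta00 y (br00 L x z))
  (theta_jacobi001 : forall x y u,
     theta01 x (br01 L y u) = theta01 (br00 L x y) u + theta01 y (br01 L x u))
  (theta_jacobi011 : forall x u v,
     theta00 x (br11 L u v) = theta11 (br01 L x u) v + theta11 u (br01 L x v))
  (theta_jacobi111 : forall u v w,
     theta01 (br11 L u v) w + theta01 (br11 L v w) u
     + theta01 (br11 L w u) v = 0).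

Definition extE : lmodType F := (ev L * M0)%type.
Definition extO : lmodType F := (od L * M1)%type.
Definition ext00 (x y : extE) : extE := (br00 L x.1 y.1, theta00 x.1 y.1).
Definition ext01 (x : extE) (u : extO) : extO := (br01 L x.1 u.1, theta01 x.1 u.1).
Definition ext11 (u v : extO) : extE := (br11 L u.1 v.1, theta11 u.1 v.1).

Lemma ext00_linl (a : F) x y z : ext00 (a *: x + y) z = a *: ext00 x z + ext00 y z.
Proof. by rewrite /ext00 /= br00_linl theta00_linl. Qed.
Lemma ext00_linr (a : F) x y z : ext00 x (a *: y + z) = a *: ext00 x y + ext00 x z.
Proof. by rewrite /ext00 /= br00_linr theta00_linr. Qed.
Lemma ext01_linl (a : F) x y u : ext01 (a *: x + y) u = a *: ext01 x u + ext01 y u.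
Proof. by rewrite /ext01 /= br01_linl theta01_linl. Qed.
Lemma ext01_linr (a : F) x u v : ext01 x (a *: u + v) = a *: ext01 x u + ext01 x v.
Proof. by rewrite /ext01 /= br01_linr theta01_linr. Qed.
Lemma ext11_linl (a : F) u v w : ext11 (a *: u + v) w = a *: ext11 u w + ext11 v w.
Proof. by rewrite /ext11 /= br11_linl theta11_linl. Qed.
Lemma ext11_linr (a : F) u v w : ext11 u (a *: v + w) = a *: ext11 u v + ext11 u w.
Proof. by rewrite /ext11 /= br11_linr theta11_linr. Qed.
Lemma ext00_skew x y : ext00 x y = - ext00 y x.
Proof. by rewrite /ext00 /= br00_skew theta00_skew. Qed.
Lemma ext11_sym u v : ext11 u v = ext11 v u.
Proof. by rewrite /ext11 /= br11_sym theta11_sym. Qed.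
Lemma ext_jacobi000 x y z :
  ext00 x (ext00 y z) = ext00 (ext00 x y) z + ext00 y (ext00 x z).
Proof. by rewrite /ext00 /= (jacobi000 x.1) (theta_jacobi000 x.1). Qed.
Lemma ext_jacobi001 x y u :
  ext01 x (ext01 y u) = ext01 (ext00 x y) u + ext01 y (ext01 x u).
Proof. by rewrite /ext00 /ext01 /= (jacobi001 x.1) (theta_jacobi001 x.1). Qed.
Lemma ext_jacobi011 x u v :
  ext00 x (ext11 u v) = ext11 (ext01 x u) v + ext11 u (ext01 x v).
Proof.
by rewrite /ext00 /ext01 /ext11 /= (jacobi011 x.1) (theta_jacobi011 x.1).
Qed.
Lemma ext_jacobi111 u v w :
  ext01 (ext11 u v) w + ext01 (ext11 v w) u + ext01 (ext11 w u) v = 0.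
Proof.
by rewrite /ext01 /ext11; congr pair; [apply: jacobi111 | apply: theta_jacobi111].
Qed.

Definition central_ext : LieSuperalgebra F :=
  @LieSuper F extE extO ext00 ext01 ext11 ext00_linl ext00_linr ext01_linl
    ext01_linr ext11_linl ext11_linr ext00_skew ext11_sym ext_jacobi000
    ext_jacobi001 ext_jacobi011 ext_jacobi111.

Lemma ext_module_central_ev (a : M0) : @central_ev F central_ext (0, a).
Proof.
split=> [y | u]; rewrite /= /ext00 /ext01 /=; congr pair.
- exact: (lin0 (f := br00 L ^~ y.1) (fun c x x' => br00_linl c x x' y.1)).
- exact: (lin0 (f := theta00 ^~ y.1) (fun c x x' => theta00_linl c x x' y.1)).
- exact: (lin0 (f := br01 L ^~ u.1) (fun c x x' => br01_linl c x x' u.1)).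
- exact: (lin0 (f := theta01 ^~ u.1) (fun c x x' => theta01_linl c x x' u.1)).
Qed.

Lemma ext_module_central_od (a : M1) : @central_od F central_ext (0, a).
Proof.
split=> [x | v]; rewrite /= /ext01 /ext11 /=; congr pair.
- exact: (lin0 (br01_lin x.1)).
- exact: (lin0 (f := theta01 x.1) (fun c u u' => theta01_linr c x.1 u u')).
- exact: (lin0 (f := br11 L ^~ v.1) (fun c u u' => br11_linl c u u' v.1)).
- exact: (lin0 (f := theta11 ^~ v.1) (fun c u u' => theta11_linl c u u' v.1)).
Qed.

Lemma ext_central_ev (x : extE) : @central_ev F central_ext x ->
  [/\ central_ev x.1, forall y, theta00 x.1 y = 0 & forall u, theta01 x.1 u = 0].
Proof.
move=> [c0 c1]; split; first split.
- by move=> y; have /(f_equal fst) := c0 (y, 0).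
- by move=> u; have /(f_equal fst) := c1 (u, 0).
- by move=> y; have /(f_equal snd) := c0 (y, 0).
- by move=> u; have /(f_equal snd) := c1 (u, 0).
Qed.

Lemma ext_central_od (u : extO) : @central_od F central_ext u ->
  [/\ central_od u.1, forall x, theta01 x u.1 = 0 & forall v, theta11 u.1 v = 0].
Proof.
move=> [c1 c0]; split; first split.
- by move=> x; have /(f_equal fst) := c1 (x, 0).
- by move=> v; have /(f_equal fst) := c0 (v, 0).
- by move=> x; have /(f_equal snd) := c1 (x, 0).
- by move=> v; have /(f_equal snd) := c0 (v, 0).
Qed.

(* If theta does not vanish identically on any nonzero central element of
   L, the centre of the extension is exactly M, so L is capable. *)
Lemma capable_of_cocycle :
  (forall x, central_ev x -> (forall y, theta00 x y = 0) ->
     (forall u, theta01 x u = 0) -> x = 0) ->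
  (forall u, central_od u -> (forall x, theta01 x u = 0) ->
     (forall v, theta11 u v = 0) -> u = 0) ->
  capable L.
Proof.
move=> nondeg_ev nondeg_od.
exists central_ext, (fun x => x.1), (fun u => u.1); split.
- by split.
- by move=> y; exists (y, 0).
- by move=> v; exists (v, 0).
- case=> x a /=; split=> [-> | /ext_central_ev [] /=]; last exact: nondeg_ev.
  exact: ext_module_central_ev.
- case=> u a /=; split=> [-> | /ext_central_od [] /=]; last exact: nondeg_od.
  exact: ext_module_central_od.
Qed.
End CentralExtension.

(* For m = 1, the cocycle of L = H_1 (+) A(r|s) with values in
   A_0 (+) (F z' (+) A_1) adding the brackets [x_1, a] for every a in A(r|s)
   and [x_1, z]; alpha is the x_1-coordinate of an even element. *)
Section CapableForOne.
Variables (F : fieldType) (r s : nat).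
Let L := dsum (Heis F 1) (Abel F r s).

Definition alpha (x : ev L) : F := (x.1 : 'rV[F]_1) 0 0.
Definition theta00 (x y : ev L) : 'rV[F]_r :=
  alpha x *: (y.2 : 'rV[F]_r) - alpha y *: (x.2 : 'rV[F]_r).
Definition theta01 (x : ev L) (u : od L) : (F^o * 'rV[F]_s)%type :=
  (alpha x * (u.1.2 : F) : F^o, alpha x *: (u.2 : 'rV[F]_s)).
Definition theta11 (u v : od L) : 'rV[F]_r := 0.

Lemma alpha_lin (a : F) x y : alpha (a *: x + y) = a * alpha x + alpha y.
Proof. by rewrite /alpha /= !mxE. Qed.

Lemma alpha0 : alpha 0 = 0.
Proof. by rewrite /alpha /= mxE. Qed.

Lemma alpha_xb : alpha (xb ord0) = 1.
Proof. by rewrite /alpha /= mxE. Qed.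

Lemma theta00_linl (a : F) x y z :
  theta00 (a *: x + y) z = a *: theta00 x z + theta00 y z.
Proof. by rewrite /theta00 alpha_lin; apply/rowP => i; rewrite !mxE /=; ring. Qed.
Lemma theta00_linr (a : F) x y z :
  theta00 x (a *: y + z) = a *: theta00 x y + theta00 x z.
Proof. by rewrite /theta00 alpha_lin; apply/rowP => i; rewrite !mxE /=; ring. Qed.
Lemma theta01_linl (a : F) x y u :
  theta01 (a *: x + y) u = a *: theta01 x u + theta01 y u.
Proof.
rewrite /theta01 alpha_lin; congr pair; first by rewrite /= /GRing.scale /=; ring.
by apply/rowP => i; rewrite !mxE /=; ring.
Qed.
Lemma theta01_linr (a : F) x u v :
  theta01 x (a *: u + v) = a *: theta01 x u + theta01 x v.
Proof.
rewrite /theta01; congr pair; first by rewrite /= /GRing.scale /=; ring.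
by apply/rowP => i; rewrite !mxE /=; ring.
Qed.
Lemma theta11_linl (a : F) u v w :
  theta11 (a *: u + v) w = a *: theta11 u w + theta11 v w.
Proof. by rewrite /theta11 scaler0 addr0. Qed.
Lemma theta11_linr (a : F) u v w :
  theta11 u (a *: v + w) = a *: theta11 u v + theta11 u w.
Proof. by rewrite /theta11 scaler0 addr0. Qed.
Lemma theta00_skew x y : theta00 x y = - theta00 y x.
Proof. by rewrite /theta00 opprB. Qed.
Lemma theta11_sym u v : theta11 u v = theta11 v u.
Proof. by []. Qed.

Lemma theta00_0r x : theta00 x 0 = 0.
Proof. by rewrite /theta00 alpha0 scale0r scaler0 subr0. Qed.
Lemma theta01_0l u : theta01 0 u = 0.
Proof. by rewrite /theta01 alpha0 mul0r scale0r. Qed.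

(* the even part of L is abelian and [L_1, L_1] = 0, so only the
   identity with two even arguments has content *)
Lemma theta_jacobi000 x y z :
  theta00 x (br00 L y z) = theta00 (br00 L x y) z + theta00 y (br00 L x z).
Proof. by rewrite /= !theta00_0r theta00_skew theta00_0r oppr0 add0r. Qed.
Lemma theta_jacobi001 x y u :
  theta01 x (br01 L y u) = theta01 (br00 L x y) u + theta01 y (br01 L x u).
Proof.
rewrite theta01_0l add0r /theta01 /= /h01 /= /alpha; congr pair; last first.
  by rewrite !scaler0.
have -> : (0 : 'I_1) = ord0 by apply: val_inj.
by rewrite /hpair !big_ord1 mulrCA.
Qed.
Lemma theta_jacobi011 x u v :
  theta00 x (br11 L u v) = theta11 (br01 L x u) v + theta11 u (br01 L x v).
Proof. by rewrite theta00_0r /theta11 addr0. Qed.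
Lemma theta_jacobi111 u v w :
  theta01 (br11 L u v) w + theta01 (br11 L v w) u + theta01 (br11 L w u) v = 0.
Proof. by rewrite !theta01_0l !addr0. Qed.

Lemma row1_eq0 (a : 'rV[F]_1) : a 0 0 = 0 -> a = 0.
Proof. by move=> a0; apply/rowP => i; rewrite ord1 mxE -a0. Qed.

Lemma theta_nondeg_ev x : central_ev x -> (forall y, theta00 x y = 0) ->
  (forall u, theta01 x u = 0) -> x = 0.
Proof.
case: x => a b [_ c01] t00 _.
have a0 : a 0 0 = 0.
  by apply: (@scale_zb_eq0 F 1 r s); move: (c01 (yb ord0)); rewrite br_yb.
have := t00 (xb ord0).
rewrite /theta00 alpha_xb /alpha /= a0 scale0r scale1r sub0r.
by move/eqP; rewrite oppr_eq0 => /eqP ->; rewrite (row1_eq0 a0).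
Qed.

Lemma theta_nondeg_od u : central_od u -> (forall x, theta01 x u = 0) ->
  (forall v, theta11 u v = 0) -> u = 0.
Proof.
case: u => [[a c] b] [c01 _] t01 _.
have a0 : a 0 0 = 0.
  by apply: (@scale_zb_eq0 F 1 r s); move: (c01 (xb ord0)); rewrite br_xb.
have := t01 (xb ord0); rewrite /theta01 alpha_xb mul1r scale1r /= => -[-> ->].
by rewrite (row1_eq0 a0).
Qed.

Lemma Heis1_sum_capable : capable L.
Proof.
exact: (capable_of_cocycle theta00_linl theta00_linr theta01_linl
  theta01_linr theta11_linl theta11_linr theta00_skew theta11_sym
  theta_jacobi000 theta_jacobi001 theta_jacobi011 theta_jacobi111
  theta_nondeg_ev theta_nondeg_od).
Qed.
End CapableForOne.

Theorem mainTheorem6 (F : fieldType)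
  (hchar2 : (2 \notin [pchar F])%N) (hchar3 : (3 \notin [pchar F])%N)
  (m r s : nat) (hm : (1 <= m)%N) (hrs : (1 <= r + s)%N) :
  capable (dsum (Heis F m) (Abel F r s)) <-> m = 1%N.
Proof.
split=> [|->]; last exact: Heis1_sum_capable.
case: m hm => [|[|m]] // _ cap.
by case: (Heis_sum_not_capable (isT : (1 < m.+2)%N) cap).
Qed.
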